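(* For every metric space $M$, $\dim_{\mathrm{MST}}(M)\le\dim_{\mathrm{Box}}(M)$. More precisely, if $\dim_{\mathrm{Box}}(M)<\beta<\infty$, then there is a constant $C<\infty$ such that $E_\beta(T)\le C$ for every minimal spanning tree $T$ on any finite set of distinct points of $M$.
   Context: A minimal spanning tree (MST) on a finite set of points in a metric space is a spanning tree of the complete graph on those points that minimizes the sum of the edge lengths; for an edge $e$, $\|e\|$ is the distance between its endpoints, and for a tree $T$ and $d\ge 0$, $E_d(T)=\sum_{e\in T}\|e\|^d$. The MST dimension is \[ \dim_{\mathrm{MST}}(M):=\inf\{d\ge 0:\ \exists C<\infty \text{ such that } E_d(T)\le C \text{ for every MST } T \text{ on any finite set of distinct points of } M\}, \] with $\inf\emptyset=\infty$. For $\epsilon>0$ let $N(\epsilon)\in\{0,1,2,\dots\}\cup\{\infty\}$ be the maximal number of pairwise disjoint open balls of radius $\epsilon$ centered at points of $M$. The upper box dimension is \[ \dim_{\mathrm{Box}}(M):=\limsup_{\epsilon\to0}\frac{\log N(\epsilon)}{\log(1/\epsilon)}. \] *)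

From HB Require Import structures.
From mathcomp Require Import all_boot all_order all_algebra.
From mathcomp Require Import all_classical all_reals all_analysis.
Set Implicit Arguments. Unset Strict Implicit. Unset Printing Implicit Defensive.
Import Order.TTheory GRing.Theory Num.Theory.
Local Open Scope ring_scope.
Local Open Scope classical_set_scope.

Section Defs.
Variables (R : realType) (T : Type) (dist : T -> T -> R).

Definition is_metric : Prop :=
  [/\ forall x y, 0 <= dist x y,
      forall x y, dist x y = 0 <-> x = y,
      forall x y, dist x y = dist y x &
      forall x y z, dist x z <= dist x y + dist y z].

(* A graph on the vertex set 'I_n (a finite point set indexed by 'I_n):
   an edge {i,j} is encoded as the ordered pair (i,j) with i < j. *)
Definition edge_rel n (E : {set 'I_n * 'I_n}) : rel 'I_n :=
  fun i j => ((i, j) \in E) || ((j, i) \in E).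

Definition spanning_tree n (E : {set 'I_n * 'I_n}) : Prop :=
  [/\ forall e, e \in E -> (e.1 < e.2)%N,
      forall i j, connect (edge_rel E) i j &
      #|E| = n.-1].

Definition Ed n (p : 'I_n -> T) (E : {set 'I_n * 'I_n}) (d : R) : R :=
  \sum_(e in E) powR (dist (p e.1) (p e.2)) d.

Definition is_MST n (p : 'I_n -> T) (E : {set 'I_n * 'I_n}) : Prop :=
  spanning_tree E /\
  forall E' : {set 'I_n * 'I_n}, spanning_tree E' -> Ed p E 1 <= Ed p E' 1.

Definition dim_MST : \bar R :=
  ereal_inf [set d%:E | d in [set d : R | 0 <= d /\
    exists C : R, forall n (p : 'I_n -> T) (E : {set 'I_n * 'I_n}),
      injective p -> is_MST p E -> Ed p E d <= C]].

Definition packing (eps : R) (k : nat) : Prop :=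
  exists x : 'I_k -> T, forall i j, i != j ->
    ~ exists z, dist (x i) z < eps /\ dist (x j) z < eps.

Definition Npack (eps : R) : \bar R :=
  ereal_sup [set (k%:R)%:E | k in packing eps].

Definition box_ratio (eps : R) : \bar R :=
  match Npack eps with
  | (r%:E)%E => (ln r / ln (1 / eps))%:E
  | _ => (+oo)%E
  end.

(* upper box dimension: limsup_{eps -> 0+} log N(eps) / log(1/eps) *)
Definition dim_Box : \bar R :=
  ereal_inf [set ereal_sup [set box_ratio eps | eps in [set e : R | 0 < e < delta]]
            | delta in [set delta : R | 0 < delta]].

End Defs.

From HB Require Import structures.
From mathcomp Require Import all_boot all_order all_algebra.
From mathcomp Require Import all_classical all_reals all_analysis.
From mathcomp Require Import ring lra.
Import Order.TTheory GRing.Theory Num.Theory.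
Local Open Scope ring_scope.
Set Implicit Arguments. Unset Strict Implicit. Unset Printing Implicit Defensive.

(** Root a minimal spanning tree and orient its edges away from the root.
   By the cut property, the child endpoints of two distinct edges of length at
   least [r] are at distance at least [r], so they carry a packing by balls of
   radius [r/2].  If [N(eps) <= eps^-s] for small [eps], with [s] between the
   box dimension and [beta], and the space is bounded (which also follows from
   the packing bound), then the [k]-th longest edge [e_k] satisfies
   [k |e_k|^s <= A], hence [E_beta(T) <= sum_k (A/k)^(beta/s)], a convergent
   series because [beta > s]. *)

Lemma connect_forward_invariant (V : finType) (r : rel V) (Q : pred V) x y :
  (forall x y, r x y -> Q x -> Q y) -> connect r x y -> Q x -> Q y.
Proof.
move=> rQ /connectP [q pq ->]; elim: q x pq => //= z q IH x /andP[rxz pzq] Qx.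
exact: IH pzq (rQ _ _ rxz Qx).
Qed.

Section EdgeRelation.
Variable n : nat.
Implicit Types (E F : {set 'I_n * 'I_n}) (e : 'I_n * 'I_n) (a b rho v x y : 'I_n).

Lemma edge_rel_sym F : symmetric (edge_rel F).
Proof. by move=> x y; rewrite /edge_rel orbC. Qed.

Lemma connect_edge_relC F x y :
  connect (edge_rel F) x y = connect (edge_rel F) y x.
Proof. exact/sym_connect_sym/edge_rel_sym. Qed.

Lemma connect_edge_rel_sub E F x y : E \subset F ->
  connect (edge_rel E) x y -> connect (edge_rel F) x y.
Proof.
move=> sEF; apply: connect_sub => u v /orP[] uv; apply: connect1;
by rewrite /edge_rel (fintype.subsetP sEF _ uv) ?orbT.
Qed.

Lemma edge_relD1 E e x y : edge_rel E x y ->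
  edge_rel (E :\ e) x y \/ (x, y) = e \/ (y, x) = e.
Proof.
rewrite /edge_rel !in_setD1 => /orP[] xy; rewrite xy !andbT.
  by have [|] := eqVneq (x, y) e; [right; left | left].
by have [|] := eqVneq (y, x) e; [right; right | left; rewrite orbT].
Qed.

(* The breadth-first distance to [rho] strictly decreases along a chosen
   neighbour of every [v != rho]; the edges to these neighbours are distinct. *)
Lemma connected_card_edges F rho :
  (forall v, connect (edge_rel F) v rho) -> (n.-1 <= #|F|)%N.
Proof.
move=> conn; set r := edge_rel F.
have exP v : exists k, `[< exists q, [/\ path r v q, last v q = rho & size q = k] >].
  by have /connectP [q pq lq] := conn v; exists (size q); apply/asboolP; exists q.
pose d v := ex_minn (exP v).
have dP v : exists q, [/\ path r v q, last v q = rho & size q = d v].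
  by rewrite /d; case: ex_minnP => m /asboolP.
have d_min v q : path r v q -> last v q = rho -> (d v <= size q)%N.
  move=> pq lq; rewrite /d; case: ex_minnP => m _; apply.
  by apply/asboolP; exists q.
have closer v : v != rho -> exists w, r v w && (d w < d v)%N.
  move=> vNrho; have [[|w q] [pq lq sq]] := dP v.
    by move: vNrho; rewrite /= -lq eqxx.
  move: pq => /= /andP[rvw pwq]; exists w; rewrite rvw /=.
  by have := d_min w q pwq lq; rewrite -sq.
pose nxt v := odflt v [pick w | r v w && (d w < d v)%N].
have nxtP v : v != rho -> r v (nxt v) && (d (nxt v) < d v)%N.
  move=> /closer [w rw]; rewrite /nxt; case: pickP => [w' -> //|/(_ w)].
  by rewrite rw.
pose edge v := if (v, nxt v) \in F then (v, nxt v) else (nxt v, v).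
pose farther e := if (d e.1 < d e.2)%N then e.2 else e.1.
have edgeF v : v != rho -> edge v \in F.
  by move=> /nxtP /andP[/orP[] h _]; rewrite /edge ?h //; case: ifP.
have edgeK v : v != rho -> farther (edge v) = v.
  move=> /nxtP /andP[_ h]; rewrite /edge /farther.
  by case: ((v, nxt v) \in F) => /=; rewrite ?h // ltnNge (ltnW h).
have -> : n.-1 = #|[set~ rho]| by rewrite cardsC1 card_ord.
rewrite -(@card_in_imset _ _ edge); last first.
  by move=> u v; rewrite !in_setC1 => hu hv e; rewrite -(edgeK u hu) e edgeK.
apply/subset_leq_card/fintype.subsetP => e /imsetP [v]; rewrite in_setC1 => hv ->.
exact: edgeF.
Qed.

Lemma connect_setD1_endpoints E e : e \in E ->
  (forall x y, connect (edge_rel E) x y) ->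
  forall v, connect (edge_rel (E :\ e)) e.1 v || connect (edge_rel (E :\ e)) e.2 v.
Proof.
move=> eE conn v.
pose Q v := connect (edge_rel (E :\ e)) e.1 v || connect (edge_rel (E :\ e)) e.2 v.
apply: (@connect_forward_invariant _ _ Q e.1 v) (conn e.1 v) _; last by rewrite /Q connect0.
move=> x y; rewrite /Q => /(edge_relD1 e) [xy|[<-|<-]] /=; rewrite ?connect0 ?orbT //.
by case/orP=> c; rewrite (connect_trans c (connect1 xy)) ?orbT.
Qed.

Lemma connect_setD1_avoiding F e rho v :
  ~~ connect (edge_rel F) rho e.1 -> ~~ connect (edge_rel F) rho e.2 ->
  connect (edge_rel F) rho v -> connect (edge_rel (F :\ e)) rho v.
Proof.
move=> rhoN1 rhoN2 rhov.
pose Q v := connect (edge_rel F) rho v && connect (edge_rel (F :\ e)) rho v.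
suff /andP[] : Q v by [].
apply: (@connect_forward_invariant _ _ Q rho v) rhov _; last by rewrite /Q !connect0.
move=> x y xy; rewrite /Q => /andP[cx cx'].
rewrite (connect_trans cx (connect1 xy)) /=.
have [xy'|[exy|exy]] := edge_relD1 e xy.
- exact: connect_trans cx' (connect1 xy').
- by move: rhoN1; rewrite -exy /= cx.
- by move: rhoN2; rewrite -exy /= cx.
Qed.

Definition tree_child E rho e :=
  if connect (edge_rel (E :\ e)) rho e.1 then e.2 else e.1.
Definition tree_parent E rho e :=
  if connect (edge_rel (E :\ e)) rho e.1 then e.1 else e.2.

Lemma edge_rel_child_parent E F rho e : e \in F ->
  edge_rel F (tree_child E rho e) (tree_parent E rho e).
Proof.
case: e => a b eF; rewrite /tree_child /tree_parent /edge_rel /=.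
by case: ifP => _; rewrite eF ?orbT.
Qed.

Lemma endpoints_child_parent E rho e (P : pred 'I_n) :
  P (tree_child E rho e) -> P (tree_parent E rho e) -> P e.1 && P e.2.
Proof. by rewrite /tree_child /tree_parent; case: ifP => _ -> ->. Qed.

Definition edge_pair a b := if (a < b)%N then (a, b) else (b, a).

Lemma edge_rel_edge_pair F a b : edge_pair a b \in F -> edge_rel F a b.
Proof. by rewrite /edge_rel /edge_pair; case: ifP => _ ->; rewrite ?orbT. Qed.

Section SpanningTree.
Variable E : {set 'I_n * 'I_n}.
Hypothesis tree : spanning_tree E.

Lemma spanning_tree_edge_disconnects e : e \in E ->
  ~~ connect (edge_rel (E :\ e)) e.1 e.2.
Proof.
have [_ conn cardE] := tree; move=> eE; apply/negP => c12.
suff : (n.-1 <= #|E :\ e|)%N.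
  by rewrite -cardE (cardsD1 e E) eE add1n ltnn.
apply: (@connected_card_edges _ e.1) => v.
case/orP: (connect_setD1_endpoints eE conn v) => c; first by rewrite connect_edge_relC.
by rewrite connect_edge_relC (connect_trans c12 c).
Qed.

Lemma tree_child_disconnected rho e : e \in E ->
  ~~ connect (edge_rel (E :\ e)) rho (tree_child E rho e).
Proof.
move=> eE; rewrite /tree_child; case: ifP => [c1|->] //.
apply: contra (spanning_tree_edge_disconnects eE) => c2.
by apply: connect_trans c2; rewrite connect_edge_relC.
Qed.

Lemma tree_parent_connected rho e : e \in E ->
  connect (edge_rel (E :\ e)) rho (tree_parent E rho e).
Proof.
have [_ conn _] := tree; move=> eE; rewrite /tree_parent; case: ifP => // c1.
case/orP: (connect_setD1_endpoints eE conn rho) => c; last by rewrite connect_edge_relC.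
by move: c1; rewrite connect_edge_relC c.
Qed.

(* If [c_e] and [c_f] stayed connected after removing either [e] or [f], the
   subtree below [f] would contain [c_e] and miss both ends of [e], hence
   survive the removal of [e] as well, joining [rho] to [c_e]. *)
Lemma tree_children_separated rho e f : e \in E -> f \in E -> e != f ->
  ~~ connect (edge_rel (E :\ e)) (tree_child E rho e) (tree_child E rho f) ||
  ~~ connect (edge_rel (E :\ f)) (tree_child E rho e) (tree_child E rho f).
Proof.
move=> eE fE ef; rewrite -negb_and; apply/negP => /andP[ce cf].
have rhoNe := tree_child_disconnected rho eE.
have rhoNf := tree_child_disconnected rho fE.
have rhoNf_e : ~~ connect (edge_rel (E :\ e)) rho (tree_child E rho f).
  by apply: contra rhoNe => h; rewrite (connect_trans h) // connect_edge_relC.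
have rhoNe_f : ~~ connect (edge_rel (E :\ f)) rho (tree_child E rho e).
  by apply: contra rhoNf => h; rewrite (connect_trans h).
have rhoNpe_f : ~~ connect (edge_rel (E :\ f)) rho (tree_parent E rho e).
  apply: contra rhoNe_f => h; apply: connect_trans h _; rewrite connect_edge_relC.
  by apply/connect1/edge_rel_child_parent; rewrite in_setD1 ef eE.
have /andP[rhoN1 rhoN2] := @endpoints_child_parent E rho e
  (fun v => ~~ connect (edge_rel (E :\ f)) rho v) rhoNe_f rhoNpe_f.
have sub : E :\ f :\ e \subset E :\ e.
  by apply/fintype.subsetP => x; rewrite !in_setD1 => /and3P[-> _ ->].
have rho_pf : connect (edge_rel (E :\ e)) rho (tree_parent E rho f).
  exact: connect_edge_rel_sub sub
    (connect_setD1_avoiding rhoN1 rhoN2 (tree_parent_connected rho fE)).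
apply: (negP rhoNf_e); apply: connect_trans rho_pf _; rewrite connect_edge_relC.
by apply/connect1/edge_rel_child_parent; rewrite in_setD1 eq_sym ef fE.
Qed.

Lemma spanning_tree_exchange e a b : e \in E ->
  ~~ connect (edge_rel (E :\ e)) a b -> spanning_tree (edge_pair a b |: E :\ e).
Proof.
have [ordE conn cardE] := tree; move=> eE nab.
set E' := _ |: _.
have aNb : a != b by apply: contra nab => /eqP ->; rewrite connect0.
have abE' : edge_rel E' a b by apply: edge_rel_edge_pair; rewrite setU11.
have abNE : edge_pair a b \notin E :\ e.
  by apply: contra nab => /edge_rel_edge_pair/connect1.
have toE' x y : connect (edge_rel (E :\ e)) x y -> connect (edge_rel E') x y.
  exact/connect_edge_rel_sub/finset.subsetUr.
have sep x : connect (edge_rel (E :\ e)) x a ->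
    connect (edge_rel (E :\ e)) x b = false.
  by move=> xa; apply: contraNF nab; apply: connect_trans; rewrite connect_edge_relC.
split.
- move=> g; rewrite in_setU1 => /orP[/eqP->|]; last by rewrite in_setD1 => /andP[_ /ordE].
  by rewrite /edge_pair; case: ifP => //= h; rewrite ltn_neqAle leqNgt h eq_sym aNb.
- have e12 : connect (edge_rel E') e.1 e.2.
    case/orP: (connect_setD1_endpoints eE conn a) => ea;
    case/orP: (connect_setD1_endpoints eE conn b) => eb;
      rewrite ?(sep _ ea) // in eb.
    + apply: connect_trans (toE' _ _ ea) (connect_trans (connect1 abE') _).
      by rewrite connect_edge_relC; exact: toE'.
    + have baE' : edge_rel E' b a by rewrite edge_rel_sym.
      apply: connect_trans (toE' _ _ eb) (connect_trans (connect1 baE') _).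
      by rewrite connect_edge_relC; exact: toE'.
  have reach v : connect (edge_rel E') e.1 v.
    case/orP: (connect_setD1_endpoints eE conn v) => h; first exact: toE'.
    exact: connect_trans e12 (toE' _ _ h).
  by move=> i j; apply: connect_trans (reach j); rewrite connect_edge_relC.
- by rewrite cardsU1 abNE -cardE (cardsD1 e E) eE.
Qed.

End SpanningTree.
End EdgeRelation.

Section RealSums.
Variable R : realType.

Lemma geometric_sum_le (r : R) J : 0 <= r < 1 -> \sum_(j < J) r ^+ j <= (1 - r)^-1.
Proof.
move=> /andP[r_ge0 r_lt1]; have r1_gt0 : 0 < 1 - r by rewrite subr_gt0.
have -> : \sum_(j < J) r ^+ j = (1 - r ^+ J) / (1 - r).
  apply: (mulIf (lt0r_neq0 r1_gt0)); rewrite mulfVK ?lt0r_neq0 //.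
  elim: J => [|J IH]; first by rewrite big_ord0 expr0 mul0r subrr.
  by rewrite big_ord_recr /= mulrDl IH exprS; ring.
by rewrite ler_pdivrMr // mulVf ?lt0r_neq0 // gerBl exprn_ge0.
Qed.

Lemma condensation_le (h : nat -> R) :
  (forall i j, (0 < i <= j)%N -> h j <= h i) -> forall J, \sum_(1 <= k < (2 ^ J)%N) h k <= \sum_(j < J) (2 ^ j)%N%:R * h (2 ^ j)%N.
Proof.
move=> h_dec; elim=> [|J IH]; first by rewrite big_geq // big_ord0.
rewrite (@big_cat_nat _ _ _ (2 ^ J)%N) //= ?expn_gt0 ?leq_exp2l //.
rewrite big_ord_recr /=; apply: lerD => //.
apply: le_trans (@ler_sum_nat _ _ _ _ (fun=> h (2 ^ J)%N) _) _.
  by move=> i /andP[hi _]; apply: h_dec; rewrite expn_gt0 hi.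
by rewrite sumr_const_nat expnS mul2n -addnn addnK mulrC mulr_natr.
Qed.

(* Cauchy condensation: the sum over [2^j <= k < 2^(j+1)] is at most
   [2^j (A / 2^j)^q = A^q r^j] with [r = 2 / 2^q < 1]. *)
Lemma sum_powR_harmonic_bounded (A q : R) : 0 <= A -> 1 < q ->
  exists C, forall m, \sum_(k < m) (A / k.+1%:R) `^ q <= C.
Proof.
move=> A_ge0 q_gt1; set r := 2 / 2 `^ q.
have r_ge0 : 0 <= r by rewrite divr_ge0 ?powR_ge0.
have r_lt1 : r < 1.
  rewrite ltr_pdivrMr ?powR_gt0 // mul1r /powR gt_eqF //.
  rewrite -[X in X < _](@lnK R 2) ?posrE // ltr_expR -[X in X < _]mul1r.
  by rewrite ltr_pM2r // ln_gt0 // ltr1n.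
exists (A `^ q * (1 - r)^-1) => m.
pose h k := (A / k%:R) `^ q.
have h_dec i j : (0 < i <= j)%N -> h j <= h i.
  move=> /andP[i_gt0 ij]; apply: ge0_ler_powR; rewrite ?nnegrE ?divr_ge0 //.
    exact: ltW (lt_trans ltr01 q_gt1).
  by apply: ler_wpM2l => //; rewrite lef_pV2 ?posrE ?ltr0n ?ler_nat ?(leq_trans i_gt0).
have powR_invl (x : R) : 0 < x -> x^-1 `^ q = (x `^ q)^-1.
  by move=> x_gt0; rewrite -powR_inv1 ?ltW // powRAC powR_inv1 ?powR_ge0.
have powR_exprl (x : R) j : 0 <= x -> (x ^+ j) `^ q = (x `^ q) ^+ j.
  by move=> x_ge0; rewrite -powR_mulrn // powRAC powR_mulrn ?powR_ge0.
have -> : \sum_(k < m) (A / k.+1%:R) `^ q = \sum_(1 <= k < m.+1) h k.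
  by rewrite big_add1 /= big_mkord.
apply: le_trans (_ : \sum_(1 <= k < (2 ^ m)%N) h k <= _).
  rewrite [X in _ <= X](@big_cat_nat _ _ _ m.+1) //=; last exact: ltn_expl.
  by rewrite lerDl; apply: sumr_ge0 => k _; apply: powR_ge0.
apply: le_trans (condensation_le h_dec m) _.
have -> : \sum_(j < m) (2 ^ j)%N%:R * h (2 ^ j)%N = A `^ q * \sum_(j < m) r ^+ j.
  rewrite mulr_sumr; apply: eq_bigr => j _.
  rewrite /h natrX powRM ?invr_ge0 ?exprn_ge0 // powR_invl ?exprn_gt0 //.
  by rewrite powR_exprl // /r exprMn exprVn; ring.
by rewrite ler_wpM2l ?powR_ge0 // geometric_sum_le ?r_ge0.
Qed.

(* The k-th largest weight [u] satisfies [k u^s <= A], so [u^(s q) <= (A/k)^q]. *)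
Lemma sum_powR_le_rank_bound (X : finType) (S : {set X}) (w : X -> R) (A s q : R) :
  0 < s -> 0 <= q -> (forall e, e \in S -> 0 <= w e) ->
  (forall e, e \in S -> #|[set f in S | w e <= w f]|%:R * w e `^ s <= A) ->
  \sum_(e in S) (w e `^ s) `^ q <= \sum_(k < #|S|) (A / k.+1%:R) `^ q.
Proof.
move=> s_gt0 q_ge0; move Hm : #|S| => m.
elim: m S Hm => [|m IH] S Hm w_ge0 rankS.
  by rewrite (cards0_eq Hm) big_set0 big_ord0.
have /card_gt0P [e0 e0S] : (0 < #|S|)%N by rewrite Hm.
have [e1 e1S e1_min] := @arg_minP _ _ _ e0 (fun x => x \in S) w e0S.
rewrite (big_setD1 e1 e1S) big_ord_recr /= addrC.
have cardS' : #|S :\ e1| = m by move: Hm; rewrite (cardsD1 e1) e1S add1n => -[].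
apply: lerD.
  apply: IH => // e; rewrite in_setD1 => /andP[_ eS]; first exact: w_ge0.
  apply: le_trans (rankS e eS); rewrite ler_wpM2r ?powR_ge0 // ler_nat.
  apply/subset_leq_card/fintype.subsetP => f.
  by rewrite !inE => /andP[/andP[_ ->] ->].
have rank_e1 : [set f in S | w e1 <= w f] = S.
  by apply/setP => f; rewrite inE andb_idr //; exact: e1_min.
have := rankS e1 e1S; rewrite rank_e1 Hm => bound_e1.
apply: ge0_ler_powR; rewrite ?nnegrE ?powR_ge0 //.
  by apply: divr_ge0 => //; apply: le_trans bound_e1; rewrite mulr_ge0 ?powR_ge0.
by rewrite ler_pdivlMr // mulrC.
Qed.

End RealSums.

Lemma ereal_lt_EFin_dense (R : realType) (x : \bar R) (b : R) :
  (x < b%:E)%E -> exists2 s : R, (x < s%:E)%E & s < b.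
Proof.
case: x => [r| |] //=; rewrite ?lte_fin => xb.
  by exists ((r + b) / 2); rewrite ?lte_fin; lra.
by exists (b - 1); rewrite ?ltNye //; lra.
Qed.

Section Packings.
Variables (R : realType) (T : Type) (dist : T -> T -> R).

Lemma packing1 (x0 : T) eps : packing dist eps 1.
Proof. by exists (fun=> x0) => i j; rewrite !ord1 eqxx. Qed.

Lemma packing_le eps eps' k : eps' <= eps -> packing dist eps k -> packing dist eps' k.
Proof.
move=> le_eps [x xP]; exists x => i j ij [z [zi zj]]; apply: (xP i j ij).
by exists z; split; apply: lt_le_trans le_eps.
Qed.

Lemma Npack_ge1 (x0 : T) eps : (1%:E <= Npack dist eps)%E.
Proof. by apply: ereal_sup_ubound; exists 1%N => //; exact: packing1. Qed.

Lemma box_ratio_ge0 (x0 : T) eps : 0 < eps < 1 -> (0 <= box_ratio dist eps)%E.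
Proof.
move=> /andP[eps_gt0 eps_lt1]; move: (Npack_ge1 x0 eps); rewrite /box_ratio.
case: (Npack dist eps) => // r; rewrite !lee_fin => r_ge1.
by rewrite divr_ge0 ?ln_ge0 // div1r invf_ge1 ?ltW.
Qed.

Lemma dim_Box_ge0 (x0 : T) : (0 <= dim_Box dist)%E.
Proof.
rewrite leNgt; apply/negP => /ereal_inf_lt [_ [delta delta_gt0 <-]].
apply/negP; rewrite -leNgt.
pose eps := Num.min delta 1 / 2.
have min_gt0 : 0 < Num.min delta 1 by rewrite lt_min delta_gt0 ltr01.
have [min_le_delta min_le1] : Num.min delta 1 <= delta /\ Num.min delta 1 <= 1.
  by rewrite !ge_min !lexx orbT.
apply: le_trans (box_ratio_ge0 x0 (_ : 0 < eps < 1)) (ereal_sup_ubound _).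
  by apply/andP; split; rewrite /eps; lra.
by exists eps => //; apply/andP; split; rewrite /eps; lra.
Qed.

Lemma dim_Box_ltP (beta : R) : (dim_Box dist < beta%:E)%E ->
  exists2 delta, 0 < delta & exists2 s, s < beta &
    forall eps, 0 < eps < delta -> (box_ratio dist eps < s%:E)%E.
Proof.
move=> /ereal_inf_lt [_ [delta delta_gt0 <-]] /ereal_lt_EFin_dense [s sup_lt s_lt].
exists delta => //; exists s => // eps eps_in.
by apply: le_lt_trans sup_lt; apply: ereal_sup_ubound; exists eps.
Qed.

Lemma packing_le_of_box_ratio_lt (x0 : T) eps s k : 0 < eps < 1 ->
  (box_ratio dist eps < s%:E)%E -> packing dist eps k -> k%:R <= eps^-1 `^ s.
Proof.
move=> /andP[eps_gt0 eps_lt1] ratio_lt pk.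
have k_le : ((k%:R)%:E <= Npack dist eps)%E by apply: ereal_sup_ubound; exists k.
move: ratio_lt k_le (Npack_ge1 x0 eps); rewrite /box_ratio.
case: (Npack dist eps) => [r| |] //=; rewrite ?lte_fin ?lee_fin => ratio_lt k_le r_ge1.
apply: le_trans k_le _.
have ln_gt0' : 0 < ln eps^-1 by rewrite ln_gt0 // invf_gt1.
rewrite div1r ltr_pdivrMr // in ratio_lt.
rewrite /powR gt_eqF ?invr_gt0 // -[r]lnK ?posrE ?(lt_le_trans ltr01) //.
by rewrite ler_expR ltW.
Qed.

Section Metric.
Hypothesis dist_metric : is_metric dist.

Lemma metric_ge0 x y : 0 <= dist x y.
Proof. by case: dist_metric. Qed.

Lemma metric_eq0 x y : dist x y = 0 -> x = y.
Proof. by case: dist_metric => _ /(_ x y) []. Qed.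

Lemma metric_sym x y : dist x y = dist y x.
Proof. by case: dist_metric. Qed.

Lemma metric_triangle x y z : dist x z <= dist x y + dist y z.
Proof. by case: dist_metric. Qed.

Lemma packing_separated eps k (x : 'I_k -> T) :
  (forall i j, i != j -> eps + eps <= dist (x i) (x j)) -> packing dist eps k.
Proof.
move=> sep; exists x => i j /sep xij [z [zi zj]].
have : dist (x i) (x j) < eps + eps.
  by apply: le_lt_trans (metric_triangle _ z _) _; rewrite (metric_sym z) ltrD.
by rewrite ltNge xij.
Qed.

(* A maximal packing of radius [e0] is a [2 e0]-net. *)
Lemma bounded_of_packing_bounded (x0 : T) (e0 B : R) : 0 < e0 ->
  (forall k, packing dist e0 k -> k%:R <= B) -> exists D, forall x y, dist x y <= D.
Proof.
move=> e0_gt0 le_B.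
have B_ge0 : 0 <= B by apply: (le_B 0%N); exists (fun=> x0) => -[].
have exP : exists k, `[< packing dist e0 k >] by exists 1%N; apply/asboolP; exact: packing1.
have boundP k : `[< packing dist e0 k >] -> (k <= Num.bound B)%N.
  move=> /asboolP /le_B k_le; rewrite ltnW // -(ltr_nat R).
  exact: le_lt_trans k_le (archi_boundP B_ge0).
case: (ex_maxnP exP boundP) => K /asboolP [c c_pack] K_max.
have net y : exists i : 'I_K, dist (c i) y < e0 + e0.
  apply: contrapT => far; suff /asboolP/K_max : packing dist e0 K.+1 by rewrite ltnn.
  exists (fun i => if unlift ord_max i is Some j then c j else y) => i j.
  case: unliftP => [i' ->|->]; case: unliftP => [j' ->|->] ij.
  - by apply: c_pack; apply: contra ij => /eqP ->.
  - move=> [z [zi zj]]; apply: far; exists i'.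
    by apply: le_lt_trans (metric_triangle _ z _) _; rewrite (metric_sym z) ltrD.
  - move=> [z [zi zj]]; apply: far; exists j'.
    by apply: le_lt_trans (metric_triangle _ z _) _; rewrite (metric_sym z) ltrD.
  - by rewrite eqxx in ij.
pose S := \sum_i \sum_j dist (c i) (c j).
have le_S i j : dist (c i) (c j) <= S.
  rewrite /S (bigD1 i) //= (bigD1 j) //= -addrA lerDl addr_ge0 ?sumr_ge0 //.
  - by move=> *; apply: metric_ge0.
  - by move=> *; apply: sumr_ge0 => *; apply: metric_ge0.
exists (e0 + e0 + (e0 + e0) + S) => x y.
have [i ix] := net x; have [j jy] := net y.
apply: le_trans (metric_triangle x (c i) y) _; rewrite (metric_sym x).
apply: le_trans (lerD (ltW ix) (metric_triangle (c i) (c j) y)) _.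
by have := le_S i j; have := ltW jy; lra.
Qed.

Lemma is_MST_edge_le_cut n (p : 'I_n -> T) E e a b :
  is_MST dist p E -> e \in E -> ~~ connect (edge_rel (E :\ e)) a b ->
  dist (p e.1) (p e.2) <= dist (p a) (p b).
Proof.
move=> [tree minE] eE nab.
have abNE : edge_pair a b \notin E :\ e.
  by apply: contra nab => /edge_rel_edge_pair/connect1.
have := minE _ (spanning_tree_exchange tree eE nab).
rewrite /Ed (big_setD1 e eE) (big_setU1 _ abNE) /= lerD2r !powRr1 ?metric_ge0 //.
by move/le_trans; apply; rewrite /edge_pair; case: ifP => _ //=; rewrite metric_sym.
Qed.

Lemma MST_long_edges_packing n (p : 'I_n -> T) E r : is_MST dist p E -> 0 < r ->
  packing dist (r / 2) #|[set e in E | r <= dist (p e.1) (p e.2)]|.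
Proof.
move=> mst r_gt0; case: n p E mst => [|n] p E mst; set L := [set e in E | _].
  by exists (fun i : 'I_#|L| => p (enum_val i).1) => i; have := ltn_ord (enum_val i).1.
apply: (@packing_separated _ _ (fun i => p (tree_child E ord0 (enum_val i)))).
move=> i j ij; rewrite -splitr.
have /setIdP[eE re] := enum_valP i; have /setIdP[fE rf] := enum_valP j.
have ef : enum_val i != enum_val j by rewrite (inj_eq enum_val_inj).
case/orP: (tree_children_separated mst.1 ord0 eE fE ef) => sep.
- exact: le_trans re (is_MST_edge_le_cut mst eE sep).
- exact: le_trans rf (is_MST_edge_le_cut mst fE sep).
Qed.

Lemma MST_energy_bounded (x0 : T) (e1 s beta : R) : 0 < e1 -> 0 < s < beta ->
  (forall eps k, 0 < eps < e1 -> packing dist eps k -> k%:R <= eps^-1 `^ s) ->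
  exists C, forall n (p : 'I_n -> T) (E : {set 'I_n * 'I_n}),
    injective p -> is_MST dist p E -> Ed dist p E beta <= C.
Proof.
move=> e1_gt0 /andP[s_gt0 s_lt_beta] Npack_le.
have e0_in : 0 < e1 / 2 < e1 by apply/andP; split; lra.
have [D D_ub] := bounded_of_packing_bounded x0 (proj1 (andP e0_in))
  (fun k => Npack_le _ k e0_in).
have D_ge0 : 0 <= D := le_trans (metric_ge0 x0 x0) (D_ub x0 x0).
set A := 2 `^ s + (2 / e1) `^ s * D `^ s.
have A_ge0 : 0 <= A by rewrite addr_ge0 ?mulr_ge0 ?powR_ge0.
set q := beta / s.
have q_gt1 : 1 < q by rewrite /q ltr_pdivlMr // mul1r.
have [C C_ub] := sum_powR_harmonic_bounded A_ge0 q_gt1.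
exists C => n p E p_inj mst.
pose w (e : 'I_n * 'I_n) := dist (p e.1) (p e.2).
have w_gt0 e : e \in E -> 0 < w e.
  move=> eE; rewrite lt0r metric_ge0 andbT; apply/eqP => /metric_eq0 /p_inj e12.
  by have [[ordE _ _] _] := mst; have := ordE e eE; rewrite e12 ltnn.
(* Use the packing bound at radius [w e / 2] if it is below [e1], and at
   radius [e1 / 2] together with [w e <= D] otherwise. *)
have rank_le e : e \in E -> #|[set f in E | w e <= w f]|%:R * w e `^ s <= A.
  move=> eE; have pk := MST_long_edges_packing mst (w_gt0 e eE).
  have we_ge0 : 0 <= w e := ltW (w_gt0 e eE).
  case: (ltP (w e / 2) e1) => we_e1.
  - have := Npack_le _ _ _ pk; rewrite divr_gt0 ?w_gt0 ?we_e1 // => /(_ isT) k_le.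
    apply: le_trans (ler_wpM2r (powR_ge0 _ _) k_le) _.
    rewrite -powRM ?invr_ge0 ?divr_ge0 // invf_div mulfVK ?lt0r_neq0 ?w_gt0 //.
    by rewrite lerDl mulr_ge0 ?powR_ge0.
  - have half_le : e1 / 2 <= w e / 2 by lra.
    have k_le := Npack_le _ _ e0_in (packing_le half_le pk).
    apply: le_trans (ler_wpM2r (powR_ge0 _ _) k_le) _; rewrite invf_div.
    apply: le_trans (_ : (2 / e1) `^ s * D `^ s <= _); last by rewrite lerDr powR_ge0.
    apply: ler_wpM2l; first exact: powR_ge0.
    by apply: ge0_ler_powR; rewrite ?nnegrE ?D_ub // ltW.
have -> : Ed dist p E beta = \sum_(e in E) (w e `^ s) `^ q.
  by apply: eq_bigr => e _; rewrite -powRrM /q mulrC divfK ?gt_eqF.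
apply: le_trans (C_ub #|E|); apply: sum_powR_le_rank_bound s_gt0 _ _ rank_le.
- exact: ltW (lt_trans ltr01 q_gt1).
- by move=> e /w_gt0/ltW.
Qed.

End Metric.

Lemma MST_energy_bounded_of_dim_Box_lt (x0 : T) beta : is_metric dist ->
  (dim_Box dist < beta%:E)%E ->
  exists C, forall n (p : 'I_n -> T) (E : {set 'I_n * 'I_n}),
    injective p -> is_MST dist p E -> Ed dist p E beta <= C.
Proof.
move=> met box_lt.
have beta_gt0 : 0 < beta by rewrite -lte_fin (le_lt_trans (dim_Box_ge0 x0)).
have [delta delta_gt0 [s0 s0_lt Hs0]] := dim_Box_ltP box_lt.
apply: (@MST_energy_bounded met x0 (Num.min delta 1) (Num.max s0 (beta / 2))).
- by rewrite lt_min delta_gt0 ltr01.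
- by rewrite lt_max gt_max s0_lt !divr_gt0 ?orbT //= ltr_pdivrMr // ltr_pMr ?ltr1n.
move=> eps k /andP[eps_gt0]; rewrite lt_min => /andP[eps_lt_delta eps_lt1] pk.
apply: le_trans (packing_le_of_box_ratio_lt x0 _ (Hs0 eps _) pk) _;
  rewrite ?eps_gt0 ?eps_lt1 ?eps_lt_delta //.
by rewrite ler_powR ?le_max ?lexx // invf_ge1 ?ltW.
Qed.

End Packings.

Unset Implicit Arguments.

Theorem lemma6 (R : realType) (T : Type) (dist : T -> T -> R) :
  is_metric dist -> (exists x : T, True) ->
  (dim_MST dist <= dim_Box dist)%E /\
  (forall beta : R, (dim_Box dist < beta%:E)%E ->
    exists C : R, forall n (p : 'I_n -> T) (E : {set 'I_n * 'I_n}),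
      injective p -> is_MST dist p E -> Ed dist p E beta <= C).
Proof.
move=> met [x0 _]; have energy := MST_energy_bounded_of_dim_Box_lt x0 met.
split=> //; have box_ge0 := dim_Box_ge0 dist x0.
case: (dim_Box dist) box_ge0 energy => [r| |] // r_ge0 energy; last exact: leey.
apply/lee_addgt0Pr => e e_gt0; rewrite -EFinD.
have [|C C_ub] := @energy (r + e); first by rewrite lte_fin ltrDl.
apply: ereal_inf_lbound; exists (r + e) => //; split; last by exists C.
by move: r_ge0; rewrite lee_fin; lra.
Qed.
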